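(* Let $S$ be a numerical semigroup with minimal generators $a_1<a_2<\cdots<a_\nu$ ($\nu\ge 2$), multiplicity $\mu=a_1$ and conductor $c$, with $a_2>\frac{c+\mu}{3}$. Let $P=\{a_1,\dots,a_\nu\}$, $P_1=\{a\in P\setminus\{\mu\}: \tfrac13(c+\mu)<a<\tfrac12(c+\mu)\}$, $P_2=\{a\in P\setminus\{\mu\}: \tfrac12(c+\mu)\le a<\tfrac23(c+\mu)\}$, $q_i=|P_i|$, let $\Sigma$ be the set of Apéry pairs and $\sigma$ the maximal cardinality of an independent set of Apéry pairs. If $\max\{q_1,q_2\}>0$, then $\sigma\ge\frac{|\Sigma|}{\max\{q_1,q_2\}}$.
   Context: A numerical semigroup is a submonoid $S\subseteq\mathbb{N}$ with finite complement; $\nu$ is the number of minimal generators, $\mu$ the smallest one, $c$ the least integer with $c+\mathbb{N}\subseteq S$. $\mathrm{Ap}(S)=\{x\in S: x-\mu\notin S\}$. An Apéry pair is a pair $(a,b)\in P_1\times P_2$ with $a+b\in\mathrm{Ap}(S)$. A set $\{(a_i,b_i)\}_{i=1}^n$ of Apéry pairs is independent if $a_i\ne a_j$ and $b_i\ne b_j$ for all $i\ne j$. *)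

From mathcomp Require Import all_boot all_order all_algebra.
Set Implicit Arguments. Unset Strict Implicit. Unset Printing Implicit Defensive.

Definition numerical_semigroup (S : pred nat) : Prop :=
  [/\ S 0, (forall x y, S x -> S y -> S (x + y)) & exists N, forall n, N <= n -> S n].

Definition is_multiplicity (S : pred nat) (mu : nat) : Prop :=
  [/\ 0 < mu, S mu & forall x, 0 < x -> S x -> mu <= x].

Definition is_conductor (S : pred nat) (c : nat) : Prop :=
  (forall n, c <= n -> S n) /\
  (forall c', (forall n, c' <= n -> S n) -> c <= c').

Definition mingen (S : pred nat) (a : nat) : bool :=
  [&& S a, 0 < a & ~~ has (fun x => S x && S (a - x)) (iota 1 a.-1)].

Definition apery (S : pred nat) (mu x : nat) : bool :=
  S x && ~~ ((mu <= x) && S (x - mu)).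

(* P1 = {a in P \ {mu} : (c+mu)/3 < a < (c+mu)/2}; such a are < c+mu. *)
Definition P1 (S : pred nat) (mu c : nat) : seq nat :=
  [seq a <- iota 0 (c + mu) |
     [&& mingen S a, a != mu, c + mu < 3 * a & 2 * a < c + mu]].

(* P2 = {a in P \ {mu} : (c+mu)/2 <= a < 2(c+mu)/3}; such a are < c+mu. *)
Definition P2 (S : pred nat) (mu c : nat) : seq nat :=
  [seq a <- iota 0 (c + mu) |
     [&& mingen S a, a != mu, c + mu <= 2 * a & 3 * a < 2 * (c + mu)]].

Definition apery_pairs (S : pred nat) (mu c : nat) : seq (nat * nat) :=
  [seq ab <- [seq (a, b) | a <- P1 S mu c, b <- P2 S mu c] |
     apery S mu (ab.1 + ab.2)].

Definition independent (S : pred nat) (mu c : nat) (I : seq (nat * nat)) : bool :=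
  [&& uniq I, all (mem (apery_pairs S mu c)) I,
      uniq (map fst I) & uniq (map snd I)].

Definition is_max_independent (S : pred nat) (mu c sigma : nat) : Prop :=
  (exists2 I, independent S mu c I & size I = sigma) /\
  (forall I, independent S mu c I -> size I <= sigma).

From mathcomp Require Import all_boot all_order all_algebra.
Import Order.TTheory GRing.Theory Num.Theory.

Set Implicit Arguments.
Unset Strict Implicit.
Unset Printing Implicit Defensive.

(* Number the elements of P1 and P2 by their positions i, j < m, where
   m = max(q1, q2), and split the pairs (a, b) into the m diagonals
   i + j = t (mod m).  On a diagonal the first coordinate determines the
   second and conversely, so the Apery pairs on each diagonal form an
   independent set; hence |Sigma| <= m sigma.  The argument is purely
   combinatorial. *)

Lemma size_le_mul_fibres (T : eqType) (s : seq T) (f : T -> nat) m k :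
  {in s, forall x, f x < m} ->
  (forall t, count (fun x => f x == t) s <= k) ->
  size s <= m * k.
Proof.
move=> f_lt fibre_le.
have count_lt t : count (fun x => f x < t) s <= t * k.
  elim: t => [|t IHt].
    by rewrite leqn0 (@eq_count _ _ pred0) ?count_pred0.
  have -> : count (fun x => f x < t.+1) s =
            count (fun x => f x < t) s + count (fun x => f x == t) s.
    rewrite -count_predUI (@eq_count _ (predI _ _) pred0) => [|x /=]; last first.
      by case: ltngtP.
    by rewrite count_pred0 addn0; apply: eq_count => x /=; rewrite ltnS leq_eqVlt orbC.
  by rewrite mulSn addnC leq_add.
by rewrite -count_predT -(eq_in_count f_lt).
Qed.

Lemma index_lt (T : eqType) (s : seq T) x n : x \in s -> size s <= n -> index x s < n.
Proof. by rewrite -index_mem; apply: leq_trans. Qed.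

Section DiagonalDecomposition.

Variables (T1 T2 : eqType) (p1 : seq T1) (p2 : seq T2) (m : nat).
Hypotheses (size_p1 : size p1 <= m) (size_p2 : size p2 <= m).

Local Notation grid := [seq (a, b) | a <- p1, b <- p2].

Definition matching (I : seq (T1 * T2)) : bool :=
  uniq (map fst I) && uniq (map snd I).

Definition diagonal (x : T1 * T2) : nat := (index x.1 p1 + index x.2 p2) %% m.

Lemma mem_grid x : x \in grid -> x.1 \in p1 /\ x.2 \in p2.
Proof. by case/allpairsP=> -[a b] [/= a_p1 b_p2 ->]. Qed.

Lemma diagonal_lt x : x \in grid -> diagonal x < m.
Proof.
case/mem_grid=> /index_lt/(_ size_p1) idx_lt _.
by rewrite ltn_pmod // (leq_ltn_trans _ idx_lt).
Qed.

Lemma diagonal_fst_inj : {in grid &, forall x y,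
  diagonal x = diagonal y -> x.1 = y.1 -> x = y}.
Proof.
move=> [a b] [a' b'] /mem_grid[/= _ b_p2] /mem_grid[/= _ b'_p2].
rewrite /diagonal /= => /eqP eq_diag eq_a; rewrite -eq_a in eq_diag *.
rewrite eqn_modDl !modn_small ?index_lt // in eq_diag.
by rewrite (@index_inj _ b p2 b b' b_p2 b'_p2 (eqP eq_diag)).
Qed.

Lemma diagonal_snd_inj : {in grid &, forall x y,
  diagonal x = diagonal y -> x.2 = y.2 -> x = y}.
Proof.
move=> [a b] [a' b'] /mem_grid[/= a_p1 _] /mem_grid[/= a'_p1 _].
rewrite /diagonal /= => /eqP eq_diag eq_b; rewrite -eq_b in eq_diag *.
rewrite eqn_modDr !modn_small ?index_lt // in eq_diag.
by rewrite (@index_inj _ a p1 a a' a_p1 a'_p1 (eqP eq_diag)).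
Qed.

Lemma matching_diagonal s t : uniq s -> {subset s <= grid} ->
  matching [seq x <- s | diagonal x == t].
Proof.
move=> s_uniq s_grid; have diag_uniq := filter_uniq (fun x => diagonal x == t) s_uniq.
apply/andP; split; rewrite map_inj_in_uniq // => x y;
  rewrite !mem_filter => /andP[/eqP dx /s_grid x_grid] /andP[/eqP dy /s_grid y_grid].
- by apply: diagonal_fst_inj; rewrite ?dx ?dy.
- by apply: diagonal_snd_inj; rewrite ?dx ?dy.
Qed.

Lemma size_le_mul_max_matching s k : uniq s -> {subset s <= grid} ->
  (forall I, {subset I <= s} -> matching I -> size I <= k) ->
  size s <= m * k.
Proof.
move=> s_uniq s_grid matching_le.
apply: (@size_le_mul_fibres _ s diagonal) => [x /s_grid/diagonal_lt // | t].
rewrite -size_filter; apply: matching_le; last exact: matching_diagonal.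
by move=> x; rewrite mem_filter => /andP[].
Qed.

End DiagonalDecomposition.

Lemma apery_pairs_uniq S mu c : uniq (apery_pairs S mu c).
Proof.
rewrite filter_uniq // allpairs_uniq ?filter_uniq ?iota_uniq //.
by move=> [x y] [x' y'] _ _ [-> ->].
Qed.

Lemma apery_pairs_sub S mu c :
  {subset apery_pairs S mu c <= [seq (a, b) | a <- P1 S mu c, b <- P2 S mu c]}.
Proof. by move=> x; rewrite mem_filter => /andP[]. Qed.

Lemma matching_independent S mu c I :
  {subset I <= apery_pairs S mu c} -> matching I -> independent S mu c I.
Proof.
move=> I_sub /andP[fst_uniq snd_uniq].
by apply/and4P; split=> //; [exact: map_uniq fst_uniq | exact/allP].
Qed.

Theorem proposition4p1 (S : pred nat) (mu c a2 sigma : nat) :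
  numerical_semigroup S ->
  is_multiplicity S mu ->
  is_conductor S c ->
  (* a2 is the second smallest minimal generator (so nu >= 2) *)
  mingen S a2 -> a2 != mu ->
  (forall a, mingen S a -> a != mu -> a2 <= a) ->
  (* a2 > (c + mu) / 3 *)
  c + mu < 3 * a2 ->
  is_max_independent S mu c sigma ->
  0 < maxn (size (P1 S mu c)) (size (P2 S mu c)) ->
  ((size (apery_pairs S mu c))%:R / (maxn (size (P1 S mu c)) (size (P2 S mu c)))%:R
     <= (sigma%:R : rat))%R.
Proof.
move=> _ _ _ _ _ _ _ [_ independent_le] m_gt0.
have size_le : size (apery_pairs S mu c)
               <= maxn (size (P1 S mu c)) (size (P2 S mu c)) * sigma.
  apply: (size_le_mul_max_matching (leq_maxl _ _) (leq_maxr _ _)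
    (apery_pairs_uniq S mu c) (@apery_pairs_sub S mu c)) => I I_sub I_matching.
  exact/independent_le/matching_independent.
by rewrite ler_pdivrMr ?ltr0n // -natrM ler_nat mulnC.
Qed.
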